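(* Let $\mathcal{H}$ be a finite family of digraphs, $h=\max_{H\in\mathcal{H}}|V(H)|$, and let $p\ge1$ be an integer. If $H^*\in\mathcal{H}^-_p$, then $|V(H^* )|\le h+(p-1)h^2$.
   Context: For a digraph $H$, $GPC(H)$ (good path completions) is the set of strongly connected digraphs of the form $H\cup P_1\cup\dots\cup P_\ell$ (union of vertex and arc sets), where each $P_i$ is a directed path with both end-points in $V(H)$ and the ordered pairs of end-points of the $P_i$ are pairwise distinct; $\{P_1,\dots,P_\ell\}$ is a witnessing collection of paths. $GPC(\mathcal{H})=\bigcup_{H\in\mathcal{H}}GPC(H)$. $\mathcal{H}^-_p$ is the set of digraphs in $GPC(\mathcal{H})$ that admit (for some $H\in\mathcal{H}$) a witnessing collection of paths all of length at most $p-1$, and $\mathcal{H}^+_p=GPC(\mathcal{H})\setminus\mathcal{H}^-_p$. *)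

From mathcomp Require Import all_boot.
Set Implicit Arguments. Unset Strict Implicit. Unset Printing Implicit Defensive.

Record digraph (T : finType) := Digraph {
  dV : {set T};
  dA : {set T * T};
  dA_sub : dA \subset setX dV dV }.

Section Defs.
Variable T : finType.

Definition strongly_connected (G : digraph T) : Prop :=
  forall u v, u \in dV G -> v \in dV G -> connect (fun x y => (x, y) \in dA G) u v.

(* A directed path is given by its sequence of (pairwise distinct) vertices
   v_0 ... v_k with k >= 1; its arcs are (v_i, v_{i+1}); its length is k. *)
Definition is_dipath (s : seq T) : bool := uniq s && (1 < size s).
Definition path_verts (s : seq T) : {set T} := [set x in s].
Definition path_arcs (s : seq T) : {set T * T} := [set e in zip s (behead s)].
Definition path_len (s : seq T) : nat := (size s).-1.
Definition path_ends (s : seq T) : option (T * T) :=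
  if s is x :: s' then Some (x, last x s') else None.

(* {P_1,...,P_l} (given by ps) is a witnessing collection of paths for
   Hs being a good path completion of H. *)
Definition witnesses (H Hs : digraph T) (ps : seq (seq T)) : Prop :=
  [/\ (forall s, s \in ps -> is_dipath s),
      (forall s, s \in ps -> forall x y, path_ends s = Some (x, y) ->
                            x \in dV H /\ y \in dV H),
      uniq (map path_ends ps),
      (dV Hs = dV H :|: (\bigcup_(s <- ps) path_verts s) /\
       dA Hs = dA H :|: (\bigcup_(s <- ps) path_arcs s)) &
      strongly_connected Hs].

Definition GPC (H Hs : digraph T) : Prop := exists ps, witnesses H Hs ps.

(* list membership (digraph T has no decidable equality) *)
Fixpoint inl (H : digraph T) (fam : seq (digraph T)) : Prop :=
  if fam is G :: fam' then G = H \/ inl H fam' else False.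

Definition in_Hminus (fam : seq (digraph T)) (p : nat) (Hs : digraph T) : Prop :=
  exists2 H, inl H fam & exists ps, witnesses H Hs ps /\
             forall s, s \in ps -> path_len s <= p - 1.

End Defs.

(** Every vertex of a good path completion [Hs] of [H] either lies in [H] or
    is an interior or final vertex of one of the witnessing paths, so
    [#|dV Hs| <= #|dV H| + sum of the path lengths]. The paths have pairwise
    distinct ordered pairs of end-points in [V(H)], so there are at most
    [#|dV H|^2] of them, each of length at most [p - 1]; finally
    [#|dV H| <= h] for [H] in the family. *)
From mathcomp Require Import all_boot.
Set Implicit Arguments.
Unset Strict Implicit.
Unset Printing Implicit Defensive.

Lemma cardsUD (T : finType) (A B : {set T}) : #|A :|: B| = #|A| + #|B :\: A|.
Proof.
by rewrite cardsU cardsD [B :&: A]setIC addnBA // subset_leq_card ?subsetIr.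
Qed.

Lemma card_bigcupD_le (I : Type) (T : finType) (r : seq I) (F : I -> {set T}) (A : {set T}) :
  #|(\bigcup_(i <- r) F i) :\: A| <= \sum_(i <- r) #|F i :\: A|.
Proof.
apply: (big_ind2 (fun B n => #|B :\: A| <= n)) => [|B1 n1 B2 n2 le1 le2|//].
  by rewrite set0D cards0.
by rewrite setDUl (leq_trans (leq_card_setU _ _)) ?leq_add.
Qed.

Lemma inl_leq_bigmax (T : finType) (fam : seq (digraph T)) (H : digraph T) :
  inl H fam -> #|dV H| <= \max_(G <- fam) #|dV G|.
Proof.
elim: fam => [|G fam IH] //= [<-|/IH le_H]; rewrite big_cons.
  exact: leq_maxl.
by rewrite (leq_trans le_H) ?leq_maxr.
Qed.

Section WitnessingPaths.
Variables (T : finType) (A : {set T}) (ps : seq (seq T)).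
Hypothesis ps_dipath : forall s, s \in ps -> is_dipath s.
Hypothesis ps_ends : forall s, s \in ps -> forall x y,
  path_ends s = Some (x, y) -> x \in A /\ y \in A.

Lemma card_path_vertsD_le s : s \in ps -> #|path_verts s :\: A| <= path_len s.
Proof.
case: s => [|x s] ps_s; first by have := ps_dipath ps_s.
have [xA _] := ps_ends ps_s erefl.
have sub_s : path_verts (x :: s) :\: A \subset [set y in s].
  apply/subsetP => y; rewrite !inE => /andP[yNA /predU1P[yx|//]].
  by rewrite yx xA in yNA.
by rewrite (leq_trans (subset_leq_card sub_s)) // cardsE card_size.
Qed.

Lemma size_paths_le : uniq (map (@path_ends T) ps) -> size ps <= #|A| ^ 2.
Proof.
move=> uniq_ends; rewrite -mulnn -cardsX cardE -(size_map (@path_ends T)) -(size_map Some (enum _)).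
apply: uniq_leq_size uniq_ends _ => _ /mapP[[|x s] ps_s ->].
  by have := ps_dipath ps_s.
have [xA yA] := ps_ends ps_s erefl.
by apply: map_f; rewrite mem_enum inE xA yA.
Qed.

Lemma card_bigcup_pathsD_le k : (forall s, s \in ps -> path_len s <= k) ->
  #|(\bigcup_(s <- ps) path_verts s) :\: A| <= size ps * k.
Proof.
move=> short; apply: leq_trans (card_bigcupD_le _ _ _) _.
rewrite mulnC -iter_addn_0 -count_predT -big_const_seq big_seq_cond [X in _ <= X]big_seq_cond.
by apply: leq_sum => s /andP[ps_s _]; rewrite (leq_trans (card_path_vertsD_le ps_s)) ?short.
Qed.

End WitnessingPaths.

Lemma card_completion_le (T : finType) (H Hs : digraph T) (ps : seq (seq T)) k :
  witnesses H Hs ps -> (forall s, s \in ps -> path_len s <= k) ->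
  #|dV Hs| <= #|dV H| + #|dV H| ^ 2 * k.
Proof.
move=> [ps_dipath ps_ends uniq_ends [-> _] _] short.
rewrite cardsUD leq_add2l (leq_trans (card_bigcup_pathsD_le ps_dipath ps_ends short)) //.
by rewrite leq_mul2r size_paths_le ?orbT.
Qed.

Theorem lemma21 (T : finType) (fam : seq (digraph T)) (p : nat) (Hs : digraph T) :
  1 <= p -> in_Hminus fam p Hs ->
  #|dV Hs| <= (\max_(H <- fam) #|dV H|) + (p - 1) * (\max_(H <- fam) #|dV H|) ^ 2.
Proof.
move=> _ [H H_fam [ps [wit short]]].
have le_H := inl_leq_bigmax H_fam.
apply: leq_trans (card_completion_le wit short) _.
by rewrite mulnC leq_add ?leq_mul ?leq_exp2r.
Qed.
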